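(* For each integer $N\ge 1$, let $S_N^{\mathrm{quant}}$ be the $N\times N$ real matrix with entries \[ (S_N^{\mathrm{quant}})_{m,n} = \frac{\sin\frac{\pi}{N}}{\sin \frac{\pi}{N}(m+n-1)} \quad (m+n\neq N+1), \qquad (S_N^{\mathrm{quant}})_{m,n}=0 \quad (m+n=N+1), \] $m,n=1,\dots,N$ (so the entries on the anti-diagonal are zero). Then the set of eigenvalues of $S_N^{\mathrm{quant}}$ is \[ \left\{ (N-1)\sin\tfrac{\pi}{N},\ (N-3)\sin\tfrac{\pi}{N},\ \ldots,\ (3-N)\sin\tfrac{\pi}{N},\ (1-N)\sin\tfrac{\pi}{N}\right\}, \] i.e. $\{(N+1-2k)\sin\frac{\pi}{N} : k=1,\dots,N\}$. *)

From HB Require Import structures.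
From mathcomp Require Import all_boot all_order all_algebra.
From mathcomp Require Import all_classical all_reals all_analysis.
Set Implicit Arguments. Unset Strict Implicit. Unset Printing Implicit Defensive.
Import Order.TTheory GRing.Theory Num.Theory.
Local Open Scope ring_scope.

Definition S_quant (R : realType) (N : nat) : 'M[R]_N :=
  \matrix_(i < N, j < N)
    if (i.+1 + j.+1 == N.+1)%N then 0
    else sin (pi / N%:R) / sin (pi / N%:R * ((i.+1 + j.+1 - 1)%N)%:R).

From HB Require Import structures.
From mathcomp Require Import all_boot all_order all_algebra.
From mathcomp Require Import all_classical all_reals all_analysis.
From mathcomp Require Import ring lra zify.
Import Order.TTheory GRing.Theory Num.Theory.
Local Open Scope ring_scope.

(* Write theta = pi / N and f n = sin theta / sin (theta n), so that the
   (m, n) entry of the matrix is f (m + n - 1); f vanishes at 0 and N and is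
   antiperiodic of period N.  For 0 <= l < N and phi = (2l + 1) theta, the
   vector u_l j = cos (phi (j + 1/2)) + sin (phi (j + 1/2)) is an eigenvector:
   expanding u_l reduces the computation to the sums over a full period of
   f n cos (phi n), which vanishes by the symmetry f (N - n) = f n, and of
   f n sin (phi n), which drops by 2 sin theta each time l increases by one
   because sum_n cos (2 m theta n) = 0 for 0 < m < N.  This produces the N
   distinct eigenvalues (N - 1 - 2 l) sin theta, and an N x N matrix has no
   others. *)

Lemma sum_periodic_shift {V : nmodType} {N : nat} {G : nat -> V} :
  (forall j, G (j + N)%N = G j) ->
  forall i, \sum_(n < N) G (i + n)%N = \sum_(n < N) G n.
Proof.
move=> G_per; elim=> [|i IH]; first by apply: eq_bigr => n _; rewrite add0n.
case: N G_per IH => [|M] G_per IH; first by rewrite !big_ord0.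
rewrite -IH big_ord_recr big_ord_recl /= addrC.
congr (_ + _); last by apply: eq_bigr => n _; rewrite /= addSnnS.
by rewrite addn0 addSnnS G_per.
Qed.

Lemma eigenvalue_in_distinct_spectrum {F : fieldType} {n : nat}
    {A : 'M[F]_n} {rs : seq F} {a : F} :
  uniq rs -> size rs = n -> all (eigenvalue A) rs -> eigenvalue A a -> a \in rs.
Proof.
move=> rs_uniq rs_size rs_eig a_eig; apply: contraT => a_notin.
have := @max_poly_roots _ (char_poly A) (a :: rs).
rewrite size_char_poly /= rs_size ltnn a_notin rs_uniq -eigenvalue_root_char.
rewrite a_eig (eq_all (fun x => esym (eigenvalue_root_char A x))) rs_eig.
by rewrite monic_neq0 ?char_poly_monic //; apply.
Qed.

Lemma sum_cos_mul_even {R : realType} (x : R) (n : nat) :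
  2 * sin x * \sum_(k < n) cos (x * (2 * k%:R))
    = sin (x * (2 * n%:R - 1)) + sin x.
Proof.
pose T (k : nat) := sin (x * (2 * k%:R - 1)).
rewrite mulr_sumr -(big_mkord xpredT (fun k => 2 * sin x * cos (x * (2 * k%:R)))).
rewrite (@telescope_sumr_eq _ _ _ T) // => [|k _].
  by rewrite /T mulr0 sub0r mulrN1 sinN opprK.
rewrite /T -[k.+1%:R]natr1.
have -> : x * (2 * (k%:R + 1) - 1) = x * (2 * k%:R) + x by ring.
have -> : x * (2 * k%:R - 1) = x * (2 * k%:R) - x by ring.
by rewrite sinD sinB; ring.
Qed.

Section QuantumSineMatrix.
Variables (R : realType) (N : nat).
Hypothesis N_gt0 : (0 < N)%N.

Let theta : R := pi / N%:R.

Lemma theta_mulN : theta * N%:R = pi.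
Proof. by rewrite /theta divfK // pnatr_eq0 -lt0n. Qed.

Lemma sin_theta_mul_gt0 {n : nat} : (0 < n < N)%N -> 0 < sin (theta * n%:R).
Proof.
case/andP=> n_gt0 n_ltN; apply: sin_gt0_pi; apply/andP; split.
  by rewrite mulr_gt0 ?ltr0n // divr_gt0 ?pi_gt0 ?ltr0n.
by rewrite -theta_mulN ltr_pM2l ?ltr_nat // divr_gt0 ?pi_gt0 ?ltr0n.
Qed.

Definition S_coef (n : nat) : R := sin theta / sin (theta * n%:R).

(* Division by zero yields 0 in Rocq, so the formula for the entries is also
   correct on the anti-diagonal, where m + n - 1 = N. *)
Lemma S_coef0 : S_coef 0 = 0.
Proof. by rewrite /S_coef mulr0 sin0 invr0 mulr0. Qed.

Lemma S_coefN : S_coef N = 0.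
Proof. by rewrite /S_coef theta_mulN sinpi invr0 mulr0. Qed.

Lemma S_coefDN (n : nat) : S_coef (n + N) = - S_coef n.
Proof. by rewrite /S_coef natrD mulrDr theta_mulN sinDpi invrN mulrN. Qed.

Lemma S_coefNB (n : nat) : (n <= N)%N -> S_coef (N - n) = S_coef n.
Proof.
move=> n_leN; rewrite /S_coef natrB // mulrBr theta_mulN addrC.
by rewrite sinDpi sinN opprK.
Qed.

Lemma S_coef_mul_sin {n : nat} : (0 < n < N)%N ->
  S_coef n * sin (theta * n%:R) = sin theta.
Proof. by move=> n_range; rewrite mulfVK // gt_eqF ?sin_theta_mul_gt0. Qed.

Lemma S_quantE (i j : 'I_N) : S_quant R N i j = S_coef (j.+1 + i).
Proof.
rewrite mxE; case: eqP => [anti_diag | _].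
  by rewrite (_ : (j.+1 + i)%N = N) ?S_coefN //; lia.
by rewrite (_ : (i.+1 + j.+1 - 1 = j.+1 + i)%N) //; lia.
Qed.

Let phi (l : nat) : R := theta * (2 * l%:R + 1).

Lemma phi_mulN (l : nat) : phi l * N%:R = (pi *+ 2) *+ l + pi.
Proof.
by rewrite /phi mulrAC theta_mulN -mulrnA -[pi *+ _]mulr_natr natrM; ring.
Qed.

Definition S_coef_cos (l n : nat) : R := S_coef n * cos (phi l * n%:R).
Definition S_coef_sin (l n : nat) : R := S_coef n * sin (phi l * n%:R).

Lemma S_coef_cos_periodic (l n : nat) : S_coef_cos l (n + N) = S_coef_cos l n.
Proof.
rewrite /S_coef_cos S_coefDN natrD mulrDr phi_mulN addrA cosDpi.
by rewrite (periodicn (@cosD2pi R)) mulrNN.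
Qed.

Lemma S_coef_sin_periodic (l n : nat) : S_coef_sin l (n + N) = S_coef_sin l n.
Proof.
rewrite /S_coef_sin S_coefDN natrD mulrDr phi_mulN addrA sinDpi.
by rewrite (periodicn (@sinD2pi R)) mulrNN.
Qed.

Lemma S_coef_cosNB (l n : nat) : (n <= N)%N ->
  S_coef_cos l (N - n) = - S_coef_cos l n.
Proof.
move=> n_leN; rewrite /S_coef_cos S_coefNB // natrB // mulrBr phi_mulN.
by rewrite [_ - _]addrC addrA cosDpi (periodicn (@cosD2pi R)) cosN mulrN.
Qed.

Lemma sum_S_coef_cos (l : nat) : \sum_(n < N) S_coef_cos l n = 0.
Proof.
have shift := sum_periodic_shift (S_coef_cos_periodic l) 1.
have reflected : \sum_(n < N) S_coef_cos l n = - \sum_(n < N) S_coef_cos l (1 + n).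
  rewrite (reindex_inj rev_ord_inj) /= -sumrN; apply: eq_bigr => n _.
  by rewrite add1n S_coef_cosNB.
by rewrite shift in reflected; lra.
Qed.

Lemma sum_cos_theta_mul_even {m : nat} : (0 < m < N)%N ->
  \sum_(k < N) cos (theta * m%:R * (2 * k%:R)) = 0.
Proof.
move=> m_range; have sin_gt0 := sin_theta_mul_gt0 m_range.
have := sum_cos_mul_even (theta * m%:R) N.
have -> : theta * m%:R * (2 * N%:R - 1) = - (theta * m%:R) + (pi *+ 2) *+ m.
  by rewrite -theta_mulN -mulrnA -[_ *+ (2 * m)]mulr_natr natrM; ring.
rewrite (periodicn (@sinD2pi R)) sinN addNr => /eqP.
by rewrite !mulf_eq0 pnatr_eq0 (gt_eqF sin_gt0) => /eqP.
Qed.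

Lemma S_coef_sin_succ (l n : nat) : (0 < n < N)%N ->
  S_coef_sin l.+1 n - S_coef_sin l n
    = 2 * sin theta * cos (theta * l.+1%:R * (2 * n%:R)).
Proof.
move=> n_range; rewrite -(S_coef_mul_sin n_range) /S_coef_sin /phi.
set a := theta * l.+1%:R * (2 * n%:R); set x := theta * n%:R.
have -> : theta * (2 * l.+1%:R + 1) * n%:R = a + x by rewrite /a /x; ring.
have -> : theta * (2 * l%:R + 1) * n%:R = a - x by rewrite /a /x -[l.+1%:R]natr1; ring.
by rewrite sinD sinB; ring.
Qed.

Lemma sum_S_coef_sin (l : nat) : (l < N)%N ->
  \sum_(n < N) S_coef_sin l n = sin theta * (N%:R - 1 - 2 * l%:R).
Proof.
have drop0 k : \sum_(n < N) S_coef_sin k n = \sum_(1 <= n < N) S_coef_sin k n.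
  by rewrite -(big_mkord xpredT) big_ltn // /S_coef_sin S_coef0 mul0r add0r.
elim: l => [|l IH] l_ltN; rewrite drop0.
  rewrite (eq_big_nat _ _ (F2 := fun => sin theta)) => [|n n_range]; last first.
    by rewrite /S_coef_sin /phi mulr0 add0r mulr1 S_coef_mul_sin.
  by rewrite sumr_const_nat -[sin theta *+ _]mulr_natr natrB //; ring.
have sum_cos := @sum_cos_theta_mul_even l.+1 l_ltN.
rewrite -(big_mkord xpredT (fun k => cos (theta * l.+1%:R * (2 * k%:R)))) in sum_cos.
rewrite big_ltn // mulr0 mulr0 cos0 in sum_cos.
rewrite -(subrK (\sum_(1 <= n < N) S_coef_sin l n) (\sum_(1 <= n < N) _)) -sumrB.
rewrite (eq_big_nat _ _ (S_coef_sin_succ l)) -mulr_sumr -drop0 IH 1?ltnW //.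
rewrite (_ : \sum_(1 <= n < N) _ = -1); last by lra.
by rewrite -[l.+1%:R]natr1; ring.
Qed.

Definition S_eigenvector (l : nat) : 'rV[R]_N :=
  \row_(j < N) (cos (phi l * (j%:R + 2^-1)) + sin (phi l * (j%:R + 2^-1))).

Lemma S_eigenvectorP (l : nat) : (l < N)%N ->
  S_eigenvector l *m S_quant R N
    = (sin theta * (N%:R - 1 - 2 * l%:R)) *: S_eigenvector l.
Proof.
move=> l_ltN; apply/rowP => j; rewrite [LHS]mxE [RHS]mxE [in RHS]mxE.
set r := phi l * (j%:R + 2^-1).
rewrite (eq_bigr (fun i : 'I_N => (cos r - sin r) * S_coef_cos l (j.+1 + i)
   + (cos r + sin r) * S_coef_sin l (j.+1 + i))) => [|i _]; last first.
  rewrite S_quantE mxE /S_coef_cos /S_coef_sin.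
  have -> : phi l * (i%:R + 2^-1) = phi l * (j.+1 + i)%:R - r.
    by rewrite /r natrD -[j.+1%:R]natr1; field.
  by rewrite cosB sinB; ring.
rewrite big_split /= -!mulr_sumr.
rewrite (sum_periodic_shift (S_coef_cos_periodic l)).
rewrite (sum_periodic_shift (S_coef_sin_periodic l)).
by rewrite sum_S_coef_cos sum_S_coef_sin //; ring.
Qed.

Lemma S_eigenvector_neq0 (l : nat) : S_eigenvector l != 0.
Proof.
apply/negP => /eqP u0.
have first_entry := congr1 (fun u : 'rV[R]_N => u 0 (Ordinal N_gt0)) u0.
have last_lt : (N.-1 < N)%N by rewrite ltn_predL.
have last_entry := congr1 (fun u : 'rV[R]_N => u 0 (Ordinal last_lt)) u0.
move: first_entry last_entry; clear u0; rewrite /= !mxE /= add0r.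
have -> : phi l * (N.-1%:R + 2^-1) = - (phi l * 2^-1) + pi + (pi *+ 2) *+ l.
  have N_pred : N%:R = N.-1%:R + 1 :> R by rewrite natr1 prednK.
  by rewrite -[in RHS]addrA [pi + _]addrC -phi_mulN N_pred; field.
rewrite (periodicn (@cosD2pi R)) (periodicn (@sinD2pi R)) cosDpi sinDpi cosN sinN.
have := cos2Dsin2 (phi l * 2^-1).
by set c := cos _; set s := sin _ => unit_circle sum0 diff0; nra.
Qed.

Lemma eigenvalue_S_quant (k : nat) : (1 <= k <= N)%N ->
  eigenvalue (S_quant R N) ((N%:R + 1 - 2 * k%:R) * sin theta).
Proof.
case: k => [//|l] /= l_ltN; apply/eigenvalueP; exists (S_eigenvector l).
  by rewrite S_eigenvectorP // -[l.+1%:R]natr1; congr (_ *: _); ring.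
exact: S_eigenvector_neq0.
Qed.

Definition S_spectrum : seq R :=
  [seq (N%:R + 1 - 2 * k%:R) * sin theta | k <- iota 1 N].

Lemma S_spectrum_uniq : uniq S_spectrum.
Proof.
have [N_gt1 | N_le1] := ltnP 1 N; last by rewrite /S_spectrum (_ : N = 1%N) //; lia.
have sin_theta_neq0 : sin theta != 0.
  by have := @sin_theta_mul_gt0 1 N_gt1; rewrite mulr1; apply: lt0r_neq0.
rewrite map_inj_in_uniq ?iota_uniq // => k k' _ _ /(mulIf sin_theta_neq0) eq_k.
by apply/eqP; rewrite -(eqr_nat R); apply/eqP; lra.
Qed.

Lemma size_S_spectrum : size S_spectrum = N.
Proof. by rewrite size_map size_iota. Qed.

Lemma S_spectrum_eigenvalues : all (eigenvalue (S_quant R N)) S_spectrum.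
Proof.
apply/allP => _ /mapP [k k_in ->]; apply: eigenvalue_S_quant.
by rewrite mem_iota in k_in; lia.
Qed.

End QuantumSineMatrix.

Theorem mainTheorem5 (R : realType) (N : nat) (hN : (1 <= N)%N) (a : R) :
  eigenvalue (S_quant R N) a <->
  exists2 k : nat, (1 <= k <= N)%N &
    a = (N%:R + 1 - 2 * k%:R) * sin (pi / N%:R).
Proof.
split=> [a_eig | [k k_range ->]]; last exact: eigenvalue_S_quant.
have := eigenvalue_in_distinct_spectrum (S_spectrum_uniq R N hN)
  (size_S_spectrum R N) (S_spectrum_eigenvalues R N hN) a_eig.
by case/mapP => k k_in ->; exists k => //; rewrite mem_iota in k_in; lia.
Qed.
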